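(* Let $p$ be an odd prime, $\underline S$ a $D_{2p}$-Tambara functor, and $a,b\in\underline S(D_{2p}/D_2)$. Then \begin{align*}N_{D_2}^{D_{2p}}(a+b)={}&N_{D_2}^{D_{2p}}(a)+N_{D_2}^{D_{2p}}(b)+\sum_{\underline x\in X}\mathrm{tr}_{D_2}^{D_{2p}}\Big(x_0\prod_{i=1}^{(p-1)/2}N_e^{D_2}\big(\zeta_p^i\,\mathrm{res}^{D_2}_e(x_i)\big)\Big)\\&+\sum_{[\underline y]\in Y}\mathrm{tr}_e^{D_{2p}}\Big(\prod_{i=1}^{p}\zeta_p^i\,\mathrm{res}^{D_2}_e(y_i)\Big),\end{align*} where $X$ is the set of $D_2$-fixed points of $\mathrm{Map}^{D_2}(D_{2p},\{a,b\})$ other than the two constant maps $f_a,f_b$, $x_i=\underline x(\zeta_p^i)$, $Y$ is the set of free $D_{2p}$-orbits in $\mathrm{Map}^{D_2}(D_{2p},\{a,b\})$, and for each $[\underline y]\in Y$ a representative $\underline y$ is chosen and $y_i=\underline y(\zeta_p^i)$; here the values $x_i,y_i\in\{a,b\}$ are read as the corresponding elements of $\underline S(D_{2p}/D_2)$, and $\zeta_p^i$ acts through the Weyl group action on $\underline S(D_{2p}/e)$.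
   Context: $D_{2p}=\langle\tau,\zeta_p\mid\tau^2=\zeta_p^p=(\tau\zeta_p)^2=1\rangle$, $D_2=\langle\tau\rangle$. A Tambara functor has restrictions, transfers and multiplicative norms satisfying the Tambara distributivity relations. $\mathrm{Map}^{D_2}(D_{2p},\{a,b\})$ is the coinduced $D_{2p}$-set of $D_2$-equivariant maps from $D_{2p}$ to the two-element set $\{a,b\}$ with trivial action. *)

From HB Require Import structures.
From mathcomp Require Import all_boot all_order all_fingroup all_algebra.
Set Implicit Arguments. Unset Strict Implicit. Unset Printing Implicit Defensive.
Import GRing.Theory.

Section GSets.
Variable gT : finGroupType.
Local Open Scope group_scope.

Record gset := GSet {
  gcar :> finType;
  gsact : gT -> gcar -> gcar;
  gsact1 : forall x, gsact 1 x = x;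
  gsactM : forall g h x, gsact (g * h) x = gsact g (gsact h x)
}.

Record gmap (X Y : gset) := GMap {
  gfun :> X -> Y;
  gfunE : forall g x, gfun (gsact g x) = gsact g (gfun x)
}.

Lemma gsactK (X : gset) g (x : X) : gsact g (gsact g^-1 x) = x.
Proof. by rewrite -gsactM mulgV gsact1. Qed.

Lemma gsactVK (X : gset) g (x : X) : gsact g^-1 (gsact g x) = x.
Proof. by rewrite -gsactM mulVg gsact1. Qed.

Definition gid (X : gset) : gmap X X := @GMap X X id (fun _ _ => erefl).

Definition gcomp (X Y Z : gset) (f : gmap Y Z) (h : gmap X Y) : gmap X Z.
Proof.
refine (@GMap X Z (fun x => f (h x)) _).
by move=> g x; rewrite !gfunE.
Defined.

Definition gempty : gset.
Proof.
refine (@GSet void (fun _ x => x) _ _); by [].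
Defined.

Definition gsum_act (X Y : gset) (g : gT) (u : (X + Y)%type) : (X + Y)%type :=
  match u with inl x => inl (gsact g x) | inr y => inr (gsact g y) end.

Definition gsum (X Y : gset) : gset.
Proof.
refine (@GSet (X + Y)%type (gsum_act (X:=X) (Y:=Y)) _ _).
- by case=> x /=; rewrite gsact1.
- by move=> g h [x|x] /=; rewrite gsactM.
Defined.

Definition ginl (X Y : gset) : gmap X (gsum X Y) :=
  @GMap X (gsum X Y) inl (fun _ _ => erefl).
Definition ginr (X Y : gset) : gmap Y (gsum X Y) :=
  @GMap Y (gsum X Y) inr (fun _ _ => erefl).

Section Pullback.
Variables (X Y Z : gset) (f : gmap X Z) (h : gmap Y Z).

Definition pb_type := {xy : X * Y | f xy.1 == h xy.2}.

Definition pb_act (g : gT) (u : pb_type) : pb_type.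
Proof.
refine (exist _ (gsact g (sval u).1, gsact g (sval u).2) _).
by rewrite /= !gfunE (eqP (svalP u)).
Defined.

Definition gpb : gset.
Proof.
refine (@GSet pb_type pb_act _ _).
- by move=> u; apply: val_inj; rewrite /= !gsact1; case: (sval u).
- by move=> g k u; apply: val_inj; rewrite /= !gsactM.
Defined.

Definition pb1 : gmap gpb X.
Proof. by refine (@GMap gpb X (fun u => (sval u).1) _). Defined.
Definition pb2 : gmap gpb Y.
Proof. by refine (@GMap gpb Y (fun u => (sval u).2) _). Defined.
End Pullback.
End GSets.

Section Exp.
Variable gT : finGroupType.
Local Open Scope group_scope.
Variables (A X Y : gset gT) (p : gmap A X) (q : gmap X Y).

(* Pi_q A = { (y, s) | s a section of p over the fibre q^-1(y) };
   s is encoded as a finite function X -> option A, undefined (None)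
   off the fibre. *)
Definition pi_good (ys : Y * {ffun X -> option A}) :=
  [forall x, if q x == ys.1 then
               (if ys.2 x is Some a then p a == x else false)
             else ys.2 x == None].

Definition pi_type := {ys : Y * {ffun X -> option A} | pi_good ys}.

Definition pi_fun (g : gT) (s : {ffun X -> option A}) : {ffun X -> option A} :=
  [ffun x : X => omap (gsact g) (s (gsact g^-1 x))].

Lemma pi_good_act g ys : pi_good ys -> pi_good (gsact g ys.1, pi_fun g ys.2).
Proof.
move=> /forallP H; apply/forallP => x /=; rewrite ffunE.
have := H (gsact g^-1 x).
have -> : (q (gsact g^-1 x) == ys.1) = (q x == gsact g ys.1).
  apply/eqP/eqP => [<-|E]; first by rewrite gfunE gsactK.
  by rewrite gfunE E gsactVK.
case: (q x == _).
  case: (ys.2 _) => //= a /eqP pa.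
  by rewrite gfunE pa gsactK.
by move/eqP ->.
Qed.

Definition pi_act (g : gT) (u : pi_type) : pi_type :=
  exist _ (gsact g (sval u).1, pi_fun g (sval u).2) (pi_good_act g (svalP u)).

Definition gpi : gset gT.
Proof.
refine (@GSet gT pi_type pi_act _ _).
- move=> [[y s] H]; apply: val_inj => /=; rewrite gsact1; congr (_, _).
  apply/ffunP => x; rewrite ffunE invg1 gsact1.
  by case: (s x) => //= a; rewrite gsact1.
- move=> g h [[y s] H]; apply: val_inj => /=; rewrite gsactM; congr (_, _).
  apply/ffunP => x; rewrite !ffunE invMg gsactM.
  by case: (s _) => //= a; rewrite gsactM.
Defined.

Definition pi_proj : gmap gpi Y.
Proof. by refine (@GMap gT gpi Y (fun u => (sval u).1) _). Defined.

(* B = Pi_q A x_Y X, encoded as pairs (u, a) with a the value of the section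
   of u at p a *)
Definition ev_type := {ua : gpi * A | (sval ua.1).2 (p ua.2) == Some ua.2}.

Lemma ev_good_act g (ua : gpi * A) :
  (sval ua.1).2 (p ua.2) == Some ua.2 ->
  (sval (gsact g ua.1)).2 (p (gsact g ua.2)) == Some (gsact g ua.2).
Proof.
move=> /eqP H; rewrite /= ffunE gfunE gsactVK H //.
Qed.

Definition ev_act (g : gT) (u : ev_type) : ev_type :=
  exist _ (gsact g (sval u).1, gsact g (sval u).2) (ev_good_act g (svalP u)).

Definition gev : gset gT.
Proof.
refine (@GSet gT ev_type ev_act _ _).
- move=> u; apply: val_inj. change ((gsact 1 (sval u).1, gsact 1 (sval u).2) = sval u). rewrite !gsact1. by case: (sval u).
- by move=> g h u; apply: val_inj; change ((gsact (g * h) (sval u).1, gsact (g * h) (sval u).2) = (gsact g (gsact h (sval u).1), gsact g (gsact h (sval u).2))); rewrite !gsactM.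
Defined.

Definition ev_eval : gmap gev A.
Proof. by refine (@GMap gT gev A (fun u => (sval u).2) _). Defined.
Definition ev_proj : gmap gev gpi.
Proof. by refine (@GMap gT gev gpi (fun u => (sval u).1) _). Defined.
End Exp.


(* tR f = restriction f^*, tT f = transfer (additive push-forward) T_f,     *)
(* tN f = norm (multiplicative push-forward) N_f.                           *)
Record tambara (gT : finGroupType) := Tambara {
  tS : gset gT -> comPzRingType;
  tR : forall X Y : gset gT, gmap X Y -> tS Y -> tS X;
  tT : forall X Y : gset gT, gmap X Y -> tS X -> tS Y;
  tN : forall X Y : gset gT, gmap X Y -> tS X -> tS Y;
  tR_id : forall X (s : tS X), tR (gid X) s = s;
  tT_id : forall X (s : tS X), tT (gid X) s = s;
  tN_id : forall X (s : tS X), tN (gid X) s = s;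
  tR_comp : forall (X Y Z : gset gT) (f : gmap Y Z) (h : gmap X Y) (s : tS Z),
      tR (gcomp f h) s = tR h (tR f s);
  tT_comp : forall (X Y Z : gset gT) (f : gmap Y Z) (h : gmap X Y) (s : tS X),
      tT (gcomp f h) s = tT f (tT h s);
  tN_comp : forall (X Y Z : gset gT) (f : gmap Y Z) (h : gmap X Y) (s : tS X),
      tN (gcomp f h) s = tN f (tN h s);
  tR_add : forall X Y (f : gmap X Y) (s t : tS Y), tR f (s + t)%R = (tR f s + tR f t)%R;
  tR_mul : forall X Y (f : gmap X Y) (s t : tS Y), tR f (s * t)%R = (tR f s * tR f t)%R;
  tR_one : forall X Y (f : gmap X Y), tR f 1%R = 1%R;
  tT_add : forall X Y (f : gmap X Y) (s t : tS X), tT f (s + t)%R = (tT f s + tT f t)%R;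
  tN_mul : forall X Y (f : gmap X Y) (s t : tS X), tN f (s * t)%R = (tN f s * tN f t)%R;
  tN_one : forall X Y (f : gmap X Y), tN f 1%R = 1%R;
  (* additivity: S(empty) = 0 and S(X + Y) = S(X) x S(Y) via restrictions *)
  t_empty : (1 : tS (gempty gT))%R = 0%R;
  t_sum : forall X Y : gset gT,
      bijective (fun u : tS (gsum X Y) => (tR (ginl X Y) u, tR (ginr X Y) u));
  tT_pb : forall (X Y Z : gset gT) (f : gmap X Z) (h : gmap Y Z) (s : tS X),
      tR h (tT f s) = tT (pb2 f h) (tR (pb1 f h) s);
  tN_pb : forall (X Y Z : gset gT) (f : gmap X Z) (h : gmap Y Z) (s : tS X),
      tR h (tN f s) = tN (pb2 f h) (tR (pb1 f h) s);
  t_distr : forall (A X Y : gset gT) (p : gmap A X) (q : gmap X Y) (s : tS A),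
      tN q (tT p s) = tT (pi_proj p q) (tN (ev_proj p q) (tR (ev_eval p q) s))
}.

Section Orbits.
Variable gT : finGroupType.
Local Open Scope group_scope.

Definition orbit_type (H : {group gT}) := {A : {set gT} | A \in lcosets H [set: gT]}.

Lemma orbit_act_subproof (H : {group gT}) g (A : orbit_type H) :
  g *: sval A \in lcosets H [set: gT].
Proof.
case: A => A /= /lcosetsP [x _ ->]; apply/lcosetsP; exists (g * x).
  by rewrite inE.
by rewrite lcosetM.
Qed.

Definition orbit_act (H : {group gT}) g (A : orbit_type H) : orbit_type H :=
  exist _ (g *: sval A) (orbit_act_subproof g A).

Definition gquot (H : {group gT}) : gset gT.
Proof.
refine (@GSet gT (orbit_type H) (@orbit_act H) _ _).
- by move=> A; apply: val_inj; rewrite /= lcoset1.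
- by move=> g h A; apply: val_inj; rewrite /= lcosetM.
Defined.

Lemma oproj_subproof (K H : {group gT}) (sKH : K \subset H) (A : gquot K) :
  sval A * H \in lcosets H [set: gT].
Proof.
case: A => A /= /lcosetsP [x _ ->]; apply/lcosetsP; exists x; first by rewrite inE.
by rewrite -mulgA mulSGid.
Qed.

Definition oproj (K H : {group gT}) (sKH : K \subset H) : gmap (gquot K) (gquot H).
Proof.
refine (@GMap gT (gquot K) (gquot H)
          (fun A => exist _ (sval A * H) (oproj_subproof sKH A)) _).
by move=> g A; apply: val_inj; rewrite /= mulgA.
Defined.

Lemma rmul_subproof g (A : gquot 1) : sval A :* g \in lcosets 1 [set: gT].
Proof.
case: A => A /= /lcosetsP [x _ ->]; apply/lcosetsP; exists (x * g).
  by rewrite inE.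
by rewrite !mulg1 mulg_set1.
Qed.

Definition rmul (g : gT) : gmap (gquot 1) (gquot 1).
Proof.
refine (@GMap gT (gquot 1) (gquot 1)
          (fun A => exist _ (sval A :* g) (rmul_subproof g A)) _).
by move=> h A; apply: val_inj; rewrite /= mulgA.
Defined.

End Orbits.

(* The operations used in the statement, for G = gT, D_2 = <[tau]>, e = 1.  *)
Section Ops.
Variables (gT : finGroupType) (S : tambara gT) (tau : gT).
Local Open Scope group_scope.

Definition res_e_D2 : tS S (gquot <[tau]>) -> tS S (gquot 1) :=
  tR (oproj (sub1G <[tau]>%G)).
Definition nm_e_D2 : tS S (gquot 1) -> tS S (gquot <[tau]>) :=
  tN (oproj (sub1G <[tau]>%G)).
Definition tr_D2_G : tS S (gquot <[tau]>) -> tS S (gquot [set: gT]) :=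
  tT (oproj (subsetT <[tau]>%G)).
Definition nm_D2_G : tS S (gquot <[tau]>) -> tS S (gquot [set: gT]) :=
  tN (oproj (subsetT <[tau]>%G)).
Definition tr_e_G : tS S (gquot 1) -> tS S (gquot [set: gT]) :=
  tT (oproj (sub1G [set: gT]%G)).
End Ops.
Arguments res_e_D2 {gT} S tau _.
Arguments nm_e_D2 {gT} S tau _.
Arguments tr_D2_G {gT} S tau _.
Arguments nm_D2_G {gT} S tau _.
Arguments tr_e_G {gT} S _.

(* Weyl group action of g on S(G/e): restriction along the G-automorphism
   xe |-> x g^-1 e of G/e (this is a left action). *)
Definition weyl (gT : finGroupType) (S : tambara gT) (g : gT) :
  tS S (gquot 1) -> tS S (gquot 1) := tR (rmul g^-1).

(* The coinduced G-set Map^{D_2}(G, {a,b}), with {a,b} encoded by bool      *)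
(* (true = a, false = b) carrying the trivial D_2-action:                   *)
(*   maps f with f (tau * x) = f x, G acting by (g . f)(x) = f (x * g).     *)
Section Coind.
Variables (gT : finGroupType) (tau : gT).
Local Open Scope group_scope.

Definition coact (g : gT) (f : {ffun gT -> bool}) : {ffun gT -> bool} :=
  [ffun x => f (x * g)].

Definition coind : {set {ffun gT -> bool}} :=
  [set f : {ffun gT -> bool} | [forall x, f (tau * x) == f x]].

Definition Xfix : {set {ffun gT -> bool}} :=
  [set f in coind | [&& coact tau f == f, f != [ffun=> true] & f != [ffun=> false]]].

Definition cofree (f : {ffun gT -> bool}) := [forall g, (coact g f == f) ==> (g == 1)].

Definition coorbit (f : {ffun gT -> bool}) := [set coact g f | g : gT].

Definition free_transversal (Y : {set {ffun gT -> bool}}) : Prop :=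
  Y \subset [set f in coind | cofree f] /\
  forall f, f \in coind -> cofree f -> #|[set y in Y | f \in coorbit y]| = 1%N.
End Coind.
Arguments Xfix {gT} tau.
Arguments coind {gT} tau.
Arguments free_transversal {gT} tau Y.

Definition val2 (gT : finGroupType) (R : Type) (a b : R) (f : {ffun gT -> bool}) (g : gT) : R :=
  if f g then a else b.
Arguments weyl {gT} S g _.

(* By the distributive law, N(a + b) is the transfer along Pi -> G/G of a norm,
   where Pi is the exponential G-set of sections of G/D_2 + G/D_2 -> G/D_2 over
   G/D_2 -> G/G; Pi is isomorphic to Map^{D_2}(G, {a,b}).  Its G-orbits are the
   two constant maps, one orbit G/D_2 for each non-constant D_2-fixed map (the
   unique D_2-fixed point of its orbit, as N_G(D_2) = D_2), and the free orbits.
   On an orbit G/K the norm factor is computed by cutting the pullback of the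
   evaluation map along G/K -> Pi into slices on which the section is constantly
   a or b: p slices G/e for a free orbit, and for a D_2-fixed map one slice G/D_2
   (the value at 1) and (p-1)/2 slices G/e (the pairs {zeta^i, zeta^-i}). *)

From HB Require Import structures.
From mathcomp Require Import all_boot all_order all_fingroup all_algebra.
From mathcomp Require Import zify.
From Stdlib Require Import ProofIrrelevance FunctionalExtensionality.
Set Implicit Arguments. Unset Strict Implicit. Unset Printing Implicit Defensive.
Import GRing.Theory.

Section Spans.
Variable gT : finGroupType.
Local Open Scope group_scope.

Lemma gmap_ext (X Y : gset gT) (f h : gmap X Y) : f =1 h -> f = h.
Proof.
case: f h => f fE [h hE] /= /functional_extensionality E; subst h.
by rewrite (proof_irrelevance _ fE hE).
Qed.

Lemma gcompE (X Y Z : gset gT) (f : gmap Y Z) (h : gmap X Y) x : gcomp f h x = f (h x).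
Proof. by []. Qed.

Lemma gidE (X : gset gT) x : gid X x = x.
Proof. by []. Qed.

Definition span (X Y : gset gT) := {G : gset gT & (gmap G X * gmap G Y)%type}.

Section RelationSpan.
Variables (X Y : gset gT) (P : pred (X * Y)).
Hypothesis P_stable : forall g xy, P xy -> P (gsact g xy.1, gsact g xy.2).

Definition rel_act g (u : {xy : X * Y | P xy}) : {xy : X * Y | P xy} :=
  exist _ (gsact g (sval u).1, gsact g (sval u).2) (P_stable g (svalP u)).

Definition rel_gset : gset gT.
Proof.
refine (@GSet gT {xy : X * Y | P xy} rel_act _ _).
- by move=> u; apply: val_inj; rewrite /= !gsact1; case: (sval u).
- by move=> g k u; apply: val_inj; rewrite /= !gsactM.
Defined.

Definition rel_span : span X Y.
Proof.
exists rel_gset; split.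
- by refine (@GMap gT rel_gset X (fun u => (sval u).1) _).
- by refine (@GMap gT rel_gset Y (fun u => (sval u).2) _).
Defined.
End RelationSpan.

Lemma rel_span_ext (X Y : gset gT) (P P' : pred (X * Y)) HP HP' :
  P =1 P' -> @rel_span X Y P HP = @rel_span X Y P' HP'.
Proof.
move=> /functional_extensionality E; subst P'.
by rewrite (proof_irrelevance _ HP HP').
Qed.

Definition pb_span (X Y Z : gset gT) (f : gmap X Z) (h : gmap Y Z) : span X Y :=
  existT _ (gpb f h) (pb1 f h, pb2 f h).

Lemma pb_rel_stable (X Y Z : gset gT) (f : gmap X Z) (h : gmap Y Z) g (xy : X * Y) :
  f xy.1 == h xy.2 -> f (gsact g xy.1) == h (gsact g xy.2).
Proof. by move=> /eqP E; rewrite !gfunE E. Qed.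

Lemma GSet_span_eq (X Y : gset gT) (C : finType) (a a' : gT -> C -> C) a1 aM a1' aM'
    (k1 : C -> X) (k2 : C -> Y) e1 e2 e1' e2' : a = a' ->
  existT (fun G : gset gT => (gmap G X * gmap G Y)%type) (@GSet gT C a a1 aM)
     (@GMap gT (GSet a1 aM) X k1 e1, @GMap gT (GSet a1 aM) Y k2 e2)
  = existT _ (@GSet gT C a' a1' aM')
     (@GMap gT (GSet a1' aM') X k1 e1', @GMap gT (GSet a1' aM') Y k2 e2').
Proof.
move=> E; subst a'.
rewrite (proof_irrelevance _ a1 a1') (proof_irrelevance _ aM aM').
by rewrite (proof_irrelevance _ e1 e1') (proof_irrelevance _ e2 e2').
Qed.

Lemma pb_spanE (X Y Z : gset gT) (f : gmap X Z) (h : gmap Y Z) :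
  pb_span f h = rel_span (@pb_rel_stable X Y Z f h).
Proof.
apply: GSet_span_eq.
by do 2![apply: functional_extensionality => ?]; apply: val_inj.
Qed.

Lemma pb_span_congr (X Y Z Z' : gset gT) (f : gmap X Z) (h : gmap Y Z)
    (f' : gmap X Z') (h' : gmap Y Z') :
  (forall x y, (f x == h y) = (f' x == h' y)) -> pb_span f h = pb_span f' h'.
Proof. by move=> E; rewrite !pb_spanE; apply: rel_span_ext => -[x y]; apply: E. Qed.

Definition codiag_fun (X : gset gT) (u : gsum X X) : X :=
  match u with inl x => x | inr x => x end.

Lemma codiag_funE (X : gset gT) g (u : gsum X X) :
  codiag_fun (gsact g u) = gsact g (codiag_fun u).
Proof. by case: u. Qed.

Definition codiag (X : gset gT) : gmap (gsum X X) X := GMap (@codiag_funE X).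

End Spans.

Section TambaraTheory.
Variables (gT : finGroupType) (S : tambara gT).
Local Open Scope ring_scope.
Local Notation res := (@tR _ S _ _).
Local Notation tr := (@tT _ S _ _).
Local Notation nm := (@tN _ S _ _).
Implicit Types X Y Z : gset gT.

Lemma tR0 X Y (f : gmap X Y) : res f 0 = 0.
Proof. by apply: (@addrI _ (res f 0)); rewrite -tR_add !addr0. Qed.

Lemma tT0 X Y (f : gmap X Y) : tr f 0 = 0.
Proof. by apply: (@addrI _ (tr f 0)); rewrite -tT_add !addr0. Qed.

Lemma tRB X Y (f : gmap X Y) u v : res f (u - v) = res f u - res f v.
Proof.
apply: (@addrI _ (res f v)); rewrite -tR_add addrC subrK.
by rewrite addrC subrK.
Qed.

Lemma tR_sum X Y (f : gmap X Y) (I : Type) (r : seq I) (P : pred I) F :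
  res f (\sum_(i <- r | P i) F i) = \sum_(i <- r | P i) res f (F i).
Proof. exact: (big_morph _ (@tR_add _ S _ _ f) (tR0 f)). Qed.

Lemma tT_sum X Y (f : gmap X Y) (I : Type) (r : seq I) (P : pred I) F :
  tr f (\sum_(i <- r | P i) F i) = \sum_(i <- r | P i) tr f (F i).
Proof. exact: (big_morph _ (@tT_add _ S _ _ f) (tT0 f)). Qed.

Lemma tR_prod X Y (f : gmap X Y) (I : Type) (r : seq I) (P : pred I) F :
  res f (\prod_(i <- r | P i) F i) = \prod_(i <- r | P i) res f (F i).
Proof. exact: (big_morph _ (@tR_mul _ S _ _ f) (@tR_one _ S _ _ f)). Qed.

Lemma tN_prod X Y (f : gmap X Y) (I : Type) (r : seq I) (P : pred I) F :
  nm f (\prod_(i <- r | P i) F i) = \prod_(i <- r | P i) nm f (F i).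
Proof. exact: (big_morph _ (@tN_mul _ S _ _ f) (@tN_one _ S _ _ f)). Qed.

Definition void_gmap X (X0 : X -> False) : gmap X (gempty gT).
Proof. by refine (@GMap gT X (gempty gT) (fun x => match X0 x with end) _). Defined.

Lemma tS_void X : (X -> False) -> forall u : tS S X, u = 0.
Proof.
move=> X0 u; have one0 : (1 : tS S X) = 0.
  by rewrite -(@tR_one _ S _ _ (void_gmap X0)) t_empty tR0.
by rewrite -[u]mulr1 one0 mulr0.
Qed.

Definition span_tT X Y (sp : span X Y) (s : tS S X) : tS S Y :=
  tr (projT2 sp).2 (res (projT2 sp).1 s).
Definition span_tN X Y (sp : span X Y) (s : tS S X) : tS S Y :=
  nm (projT2 sp).2 (res (projT2 sp).1 s).

(* For injective j the pullback of j along itself is the diagonal, that is the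
   pullback of gid along gid. *)
Lemma tR_tT_inj X Z (j : gmap X Z) : injective j -> forall s, res j (tr j s) = s.
Proof.
move=> j_inj s; rewrite tT_pb -/(span_tT (pb_span j j) s).
rewrite (pb_span_congr (f' := gid X) (h' := gid X) (inj_eq j_inj)).
by rewrite /span_tT /= -tT_pb tR_id tT_id.
Qed.

Lemma tR_tN_inj X Z (j : gmap X Z) : injective j -> forall s, res j (nm j s) = s.
Proof.
move=> j_inj s; rewrite tN_pb -/(span_tN (pb_span j j) s).
rewrite (pb_span_congr (f' := gid X) (h' := gid X) (inj_eq j_inj)).
by rewrite /span_tN /= -tN_pb tR_id tN_id.
Qed.

Lemma tR_tT_disjoint X Y Z (j : gmap X Z) (k : gmap Y Z) :
  (forall x y, j x <> k y) -> forall s, res k (tr j s) = 0.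
Proof.
move=> jk s; have pb0 : gpb j k -> False by case=> -[x y] /= /eqP; apply: jk.
by rewrite tT_pb (tS_void pb0 (res _ s)) tT0.
Qed.

Lemma tR_tN_disjoint X Y Z (j : gmap X Z) (k : gmap Y Z) :
  (forall x y, j x <> k y) -> forall s, res k (nm j s) = 1.
Proof.
move=> jk s; have pb0 : gpb j k -> False by case=> -[x y] /= /eqP; apply: jk.
by rewrite tN_pb (tS_void pb0 (res _ s)) -(tS_void pb0 1) tN_one.
Qed.

Lemma tS_sum_eq0 X Y (v : tS S (gsum X Y)) :
  res (ginl X Y) v = 0 -> res (ginr X Y) v = 0 -> v = 0.
Proof.
move=> vl vr; have [f fK _] := t_sum S X Y.
by rewrite -[v]fK -[0 in RHS](fK 0) /= !tR0 vl vr.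
Qed.

Section Partition.
Variable X : gset gT.

Definition piece := {O : gset gT & gmap O X}.

Fixpoint gsums (cs : seq piece) : gset gT :=
  if cs is c :: cs' then gsum (projT1 c) (gsums cs') else gempty gT.

Fixpoint sums_fun (cs : seq piece) : gsums cs -> X :=
  match cs return gsums cs -> X with
  | [::] => fun v => match v with end
  | c :: cs' => fun v => match v with inl o => projT2 c o | inr w => sums_fun w end
  end.

Lemma sums_funE cs g (v : gsums cs) : sums_fun (gsact g v) = gsact g (sums_fun v).
Proof.
elim: cs v => [|c cs IH] /=; first by case.
by case=> [o|w] /=; rewrite ?gfunE ?IH.
Qed.

Definition sums_map cs : gmap (gsums cs) X := GMap (@sums_funE cs).

Variables (I : finType) (pc : I -> piece).
Hypothesis pc_inj : forall i, injective (projT2 (pc i)).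
Hypothesis pc_disjoint : forall i k (o : projT1 (pc i)) (o' : projT1 (pc k)),
  projT2 (pc i) o = projT2 (pc k) o' -> i = k.
Hypothesis pc_cover : forall x, exists i, exists o, projT2 (pc i) o = x.

Lemma sums_fun_piece (l : seq I) (v : gsums (map pc l)) :
  exists2 i, i \in l & exists o, sums_fun v = projT2 (pc i) o.
Proof.
elim: l v => [|i l IH] /=; first by case.
case=> [o|w]; first by exists i; rewrite ?mem_head //; exists o.
by have [k kl [o Ho]] := IH w; exists k; [rewrite inE kl orbT | exists o].
Qed.

Lemma sums_fun_inj (l : seq I) : uniq l -> injective (@sums_fun (map pc l)).
Proof.
elim: l => [|i l IH] /=; first by move=> _ [].
case/andP=> il ul [o|w] [o'|w'] /= E.
- by rewrite (pc_inj E).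
- have [k kl [o2 Ho2]] := sums_fun_piece w'.
  by move: E; rewrite Ho2 => /pc_disjoint ik; rewrite ik kl in il.
- have [k kl [o2 Ho2]] := sums_fun_piece w.
  by move: E; rewrite Ho2 => /esym /pc_disjoint ik; rewrite ik kl in il.
- by rewrite (IH ul _ _ E).
Qed.

Lemma sums_fun_onto (l : seq I) x : (exists2 i, i \in l & exists o, projT2 (pc i) o = x) ->
  exists v : gsums (map pc l), sums_fun v == x.
Proof.
elim: l => [|i l IH] [k] //= kl [o Ho].
have [ki|ki] := eqVneq k i; first by subst k; exists (inl o); rewrite /= Ho.
have [|w Hw] := IH; last by exists (inr w).
by exists k; [move: kl; rewrite inE (negPf ki) | exists o].
Qed.

Let cs := map pc (enum I).

Lemma sums_fun_onto_all x : exists v : gsums cs, sums_fun v == x.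
Proof.
by apply: sums_fun_onto; have [i [o Ho]] := pc_cover x; exists i; [rewrite mem_enum | exists o].
Qed.

Definition sums_inv (x : X) : gsums cs := xchoose (sums_fun_onto_all x).

Lemma sums_invK x : sums_fun (sums_inv x) = x.
Proof. exact/eqP/(xchooseP (sums_fun_onto_all x)). Qed.

Lemma sums_invE g x : sums_inv (gsact g x) = gsact g (sums_inv x).
Proof. by apply: (sums_fun_inj (enum_uniq I)); rewrite sums_funE !sums_invK. Qed.

Lemma res_sums_eq0 (l : seq I) u :
  (forall i, res (projT2 (pc i)) u = 0) -> res (sums_map (map pc l)) u = 0.
Proof.
move=> u0; elim: l => [|i l IH] /=; first by apply: tS_void; case.
apply: tS_sum_eq0; rewrite -tR_comp; last by rewrite -IH; congr (res _ u); apply: gmap_ext.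
by rewrite -(u0 i); congr (res _ u); apply: gmap_ext.
Qed.

(* The pieces assemble to an isomorphism gsums cs ~ X, and S turns finite
   disjoint unions into products. *)
Lemma res_pieces_inj (u v : tS S X) :
  (forall i, res (projT2 (pc i)) u = res (projT2 (pc i)) v) -> u = v.
Proof.
move=> uv; apply/eqP; rewrite -subr_eq0; apply/eqP.
have -> : u - v = res (gcomp (sums_map cs) (GMap sums_invE)) (u - v).
  have -> : gcomp (sums_map cs) (GMap sums_invE) = gid X.
    by apply: gmap_ext => x; rewrite gcompE /= sums_invK.
  by rewrite tR_id.
by rewrite tR_comp res_sums_eq0 ?tR0 // => i; rewrite tRB uv subrr.
Qed.

Lemma tT_partition (s : tS S X) :
  s = \sum_i tr (projT2 (pc i)) (res (projT2 (pc i)) s).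
Proof.
apply: res_pieces_inj => i; rewrite tR_sum (bigD1 i) //= tR_tT_inj // big1 ?addr0 //.
by move=> k ki; apply: tR_tT_disjoint => o o' /pc_disjoint E; rewrite E eqxx in ki.
Qed.

Lemma tN_partition (s : tS S X) :
  s = \prod_i nm (projT2 (pc i)) (res (projT2 (pc i)) s).
Proof.
apply: res_pieces_inj => i; rewrite tR_prod (bigD1 i) //= tR_tN_inj // big1 ?mulr1 //.
by move=> k ki; apply: tR_tN_disjoint => o o' /pc_disjoint E; rewrite E eqxx in ki.
Qed.

Lemma tT_partition_along Y (f : gmap X Y) (s : tS S X) :
  tr f s = \sum_i tr (gcomp f (projT2 (pc i))) (res (projT2 (pc i)) s).
Proof. by rewrite {1}(tT_partition s) tT_sum; apply: eq_bigr => i _; rewrite tT_comp. Qed.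

Lemma tN_partition_along Y (f : gmap X Y) (s : tS S X) :
  nm f s = \prod_i nm (gcomp f (projT2 (pc i))) (res (projT2 (pc i)) s).
Proof. by rewrite {1}(tN_partition s) tN_prod; apply: eq_bigr => i _; rewrite tN_comp. Qed.

End Partition.

Lemma tS_sum_onto X Y (a : tS S X) (b : tS S Y) :
  exists s : tS S (gsum X Y), res (ginl X Y) s = a /\ res (ginr X Y) s = b.
Proof.
have [f _ Kf] := t_sum S X Y; exists (f (a, b)).
by have := Kf (a, b); case=> -> ->.
Qed.

Lemma tT_codiag X (s : tS S (gsum X X)) :
  tr (codiag X) s = res (ginl X X) s + res (ginr X X) s.
Proof.
pose pc (i : bool) : piece (gsum X X) := existT _ X (if i then ginl X X else ginr X X).
rewrite (@tT_partition_along (gsum X X) bool pc); first last.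
- by case=> x; [exists true | exists false]; exists x.
- by case; case=> x y.
- by case=> x y [].
rewrite big_bool /=.
have -> : gcomp (codiag X) (ginl X X) = gid X by apply: gmap_ext.
have -> : gcomp (codiag X) (ginr X X) = gid X by apply: gmap_ext.
by rewrite !tT_id.
Qed.

End TambaraTheory.

Section Cosets.
Variable gT : finGroupType.
Local Open Scope group_scope.
Implicit Types (K : {group gT}) (g x y c : gT).

Lemma lcos_subproof K x : x *: (K : {set gT}) \in lcosets K [set: gT].
Proof. by rewrite mem_lcosets mulGSid ?subsetT ?inE. Qed.

Definition lcos K x : gquot K := exist _ (x *: (K : {set gT})) (lcos_subproof K x).

Lemma lcosP K (o : gquot K) : exists x, o = lcos K x.
Proof. by case: o => A /[dup] /lcosetsP [x _ E] HA; exists x; apply: val_inj. Qed.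

Lemma lcos_eq K x y : (lcos K x == lcos K y) = (x^-1 * y \in K).
Proof.
apply/eqP/idP => [/(congr1 val) /= E|Kxy]; first by rewrite -mem_lcoset E lcoset_refl.
by apply: val_inj => /=; apply/lcoset_eqP; rewrite mem_lcoset -groupV invMg invgK.
Qed.

Lemma mem_lcos K x c : (c \in sval (lcos K x)) = (x^-1 * c \in K).
Proof. by rewrite /= mem_lcoset. Qed.

Lemma mem_lcos1 x c : (c \in sval (lcos 1%G x)) = (c == x).
Proof. by rewrite mem_lcos eq_sym eq_mulVg1 -in_set1 -set1gE. Qed.

Lemma oproj_lcos K (L : {group gT}) (sKL : K \subset L) x : oproj sKL (lcos K x) = lcos L x.
Proof. by apply: val_inj; rewrite /= -mulgA mulSGid. Qed.

Lemma rmul_lcos g x : rmul g (lcos 1%G x) = lcos 1%G (x * g).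
Proof. by apply: val_inj; rewrite /= !mulg1 mulg_set1. Qed.

Lemma gquotT_single (o o' : gquot [set: gT]%G) : o = o'.
Proof. by have [x ->] := lcosP o; have [y ->] := lcosP o'; apply/eqP; rewrite lcos_eq inE. Qed.

Lemma gmap_to_point (X : gset gT) (h h' : gmap X (gquot [set: gT]%G)) : h = h'.
Proof. by apply: gmap_ext => x; apply: gquotT_single. Qed.

End Cosets.

Section CoinducedAction.
Variable gT : finGroupType.
Local Open Scope group_scope.
Implicit Types (g h : gT) (f : {ffun gT -> bool}).

Lemma coactM g h f : coact g (coact h f) = coact (g * h) f.
Proof. by apply/ffunP => x; rewrite !ffunE mulgA. Qed.

Lemma coact1 f : coact 1 f = f.
Proof. by apply/ffunP => x; rewrite !ffunE mulg1. Qed.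

Lemma coactK g f : coact g^-1 (coact g f) = f.
Proof. by rewrite coactM mulVg coact1. Qed.

Lemma coactX g f n : coact g f = f -> coact (g ^+ n) f = f.
Proof. by move=> gf; elim: n => [|n IH]; rewrite ?coact1 // expgS -coactM IH gf. Qed.

Lemma coact_const g (v : bool) : coact g [ffun=> v] = [ffun=> v].
Proof. by apply/ffunP => x; rewrite !ffunE. Qed.

Lemma coact_nonconst g f (v : bool) : f != [ffun=> v] -> coact g f != [ffun=> v].
Proof. by apply: contra => /eqP E; rewrite -(coactK g f) E coact_const. Qed.

Lemma cofree_coact f h : cofree f -> cofree (coact h f).
Proof.
move=> /forallP f_free; apply/forallP => g; apply/implyP => /eqP hgf.
have E : h^-1 * g * h = 1.
  by apply/eqP; apply: (implyP (f_free _)); apply/eqP; rewrite -!coactM hgf coactK.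
have -> : g = h * (h^-1 * g * h) * h^-1 by rewrite !mulgA mulgV mul1g mulgK.
by rewrite E mulg1 mulgV.
Qed.

Lemma const_not_cofree (t : gT) (v : bool) : t != 1 -> ~~ cofree ([ffun=> v] : {ffun gT -> bool}).
Proof. by move=> t1; apply/forallP => /(_ t); rewrite coact_const eqxx (negPf t1). Qed.

Lemma coorbitP f y : reflect (exists g, f = coact g y) (f \in coorbit y).
Proof. by apply: (iffP imsetP) => [[g _ ->]|[g ->]]; exists g. Qed.

End CoinducedAction.

Lemma prod_shift1 (R : comPzSemiRingType) n (F : nat -> R) : (0 < n)%N -> F n = F 0%N ->
  (\prod_(1 <= i < n.+1) F i = \prod_(i < n) F i)%R.
Proof.
by move=> n_gt0 Fn; rewrite big_nat_recr // Fn -(big_mkord xpredT F) [in RHS]big_ltn // mulrC.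
Qed.

Lemma ltn_dvdn_eq0 d m : (m < d)%N -> (d %| m)%N -> m = 0%N.
Proof. by move=> md; rewrite /dvdn modn_small // => /eqP. Qed.

Section Dihedral.
Variables (gT : finGroupType) (t z : gT) (p : nat).
Local Open Scope group_scope.
Hypotheses (p_prime : prime p) (p_odd : odd p) (t2 : t ^+ 2 = 1) (zp : z ^+ p = 1)
  (tz2 : (t * z) ^+ 2 = 1) (gen_tz : <<[set t; z]>> = [set: gT])
  (card_gT : #|gT| = (2 * p)%N).
Local Notation H := <[t]>%G.

Definition tpow (e : bool) : gT := if e then t else 1.

Lemma mul_tt : t * t = 1. Proof. by rewrite -t2 expgS expg1. Qed.

Lemma invt : t^-1 = t. Proof. by rewrite -[t^-1]mulg1 -mul_tt mulKg. Qed.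

Lemma invz : z^-1 = z ^+ p.-1.
Proof. by apply: (@mulgI _ z); rewrite mulgV -expgS prednK ?zp ?prime_gt0. Qed.

Lemma invz_expz k : (z ^+ k)^-1 = z ^+ (k * p.-1).
Proof. by rewrite -expgVn invz -expgM mulnC. Qed.

Lemma mul_t_expz k : t * z ^+ k = z ^+ (k * p.-1) * t.
Proof.
have tzV : t * z = z^-1 * t.
  have tz_inv : (t * z)^-1 = t * z.
    by apply/eqP; rewrite eq_invg_mul -tz2 expgS expg1.
  by rewrite -{1}tz_inv invMg invt.
elim: k => [|k IH]; first by rewrite !expg0 mulg1 mul1g.
by rewrite expgSr mulgA IH -mulgA tzV invz mulgA -expgD mulSn addnC.
Qed.

Lemma mul_t_invz k : t * (z ^+ k)^-1 = z ^+ k * t.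
Proof.
have tzt : t * z ^+ k * t = (z ^+ k)^-1 by rewrite mul_t_expz invz_expz -mulgA mul_tt mulg1.
by rewrite -tzt !mulgA mul_tt mul1g.
Qed.

Lemma expz_mod k : z ^+ (k %% p) = z ^+ k. Proof. exact: expg_mod. Qed.

Lemma mul_nf m m' e e' : z ^+ m * tpow e * (z ^+ m' * tpow e') =
  z ^+ (m + m' * (if e then p.-1 else 1%N))%N * tpow (e (+) e').
Proof.
case: e; case: e' => /=; rewrite ?mulg1 ?muln1.
- by rewrite !mulgA -(mulgA _ t (z ^+ m')) mul_t_expz !mulgA -expgD -mulgA mul_tt mulg1.
- by rewrite -mulgA mul_t_expz mulgA -expgD.
- by rewrite mulgA -expgD.
- by rewrite -expgD.
Qed.

Definition nf_set := [set g : gT | [exists m : 'I_p, exists e : bool, g == z ^+ m * tpow e]].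

Lemma nf_set_group : group_set nf_set.
Proof.
apply/group_setP; split.
  rewrite inE; apply/existsP; exists (Ordinal (prime_gt0 p_prime)); apply/existsP.
  by exists false; rewrite /= mulg1.
move=> x y; rewrite !inE => /existsP[m /existsP[e /eqP->]] /existsP[m' /existsP[e' /eqP->]].
have lt_mod n : (n %% p < p)%N by rewrite ltn_mod prime_gt0.
apply/existsP; exists (Ordinal (lt_mod (m + m' * (if e then p.-1 else 1%N))%N)).
by apply/existsP; exists (e (+) e'); apply/eqP; rewrite mul_nf /= expz_mod.
Qed.

Lemma dihedral_nf g : exists m : 'I_p, exists e, g = z ^+ m * tpow e.
Proof.
have : g \in nf_set.
  have sub : [set: gT] \subset nf_set.
    rewrite -gen_tz (@gen_subG _ _ (Group nf_set_group)) subUset !sub1set !inE.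
    apply/andP; split; apply/existsP.
      exists (Ordinal (prime_gt0 p_prime)); apply/existsP; exists true.
      by rewrite /= mul1g.
    exists (Ordinal (prime_gt1 p_prime)); apply/existsP; exists false.
    by rewrite /= mulg1 expg1.
  by apply: (subsetP sub); rewrite inE.
by rewrite inE => /existsP[m /existsP[e /eqP->]]; exists m, e.
Qed.

(* The 2p normal forms cover gT, which has exactly 2p elements. *)
Lemma nf_inj (m m' : 'I_p) e e' : z ^+ m * tpow e = z ^+ m' * tpow e' -> m = m' /\ e = e'.
Proof.
pose nf (me : 'I_p * bool) := z ^+ me.1 * tpow me.2.
have nf_inj : injective nf.
  have onto g : g \in image nf predT.
    by have [k [b ->]] := dihedral_nf g; apply/imageP; exists (k, b).
  have card_nf : #|image nf predT| == #|{: ('I_p * bool)%type}|.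
    have -> : #|image nf predT| = #|gT| by apply: eq_card => g; rewrite onto.
    by rewrite card_gT cardT -cardE card_prod card_ord card_bool mulnC.
  by move/image_injP: card_nf => nf_inj x y; apply: nf_inj.
by move=> /(nf_inj (m, e) (m', e')) [-> ->].
Qed.

Lemma expz_eq1 k : z ^+ k = 1 -> (p %| k)%N.
Proof.
move=> zk1; have lt_k : (k %% p < p)%N by rewrite ltn_mod prime_gt0.
have := @nf_inj (Ordinal lt_k) (Ordinal (prime_gt0 p_prime)) false false.
by rewrite /= !mulg1 expz_mod zk1 expg0 => /(_ erefl) [/(congr1 val) /= /eqP].
Qed.

Lemma expz_neq_t k : z ^+ k <> t.
Proof.
move=> zkt; have lt_k : (k %% p < p)%N by rewrite ltn_mod prime_gt0.
have := @nf_inj (Ordinal lt_k) (Ordinal (prime_gt0 p_prime)) false true.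
by rewrite /= mulg1 expz_mod zkt expg0 mul1g => /(_ erefl) [].
Qed.

Lemma t_neq1 : t != 1.
Proof. by apply/eqP => t1; apply: (@expz_neq_t 0); rewrite expg0 t1. Qed.

Lemma expz_inj i k : (i < p)%N -> (k < p)%N -> z ^+ i = z ^+ k -> i = k.
Proof.
move=> ip kp E; have := @nf_inj (Ordinal ip) (Ordinal kp) false false.
by rewrite /= !mulg1 => /(_ E) [/(congr1 val)].
Qed.

Lemma invz_sqr_eq1 m : (z ^+ m)^-1 * (z ^+ m)^-1 = 1 -> (p %| m)%N.
Proof.
move=> zm2; have : (p %| m + m)%N.
  by apply: expz_eq1; rewrite expgD; apply/eqP; rewrite -invg_eq1 invMg zm2.
rewrite addnn -mul2n Euclid_dvdM // => /orP[p2|//].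
suff p_eq2 : p = 2%N by move: p_odd; rewrite p_eq2.
by apply/eqP; rewrite eqn_leq (dvdn_leq _ p2) // prime_gt1.
Qed.

Lemma half_double_p : (p./2 + p./2).+1 = p.
Proof. by have := odd_double_half p; rewrite p_odd -addnn add1n. Qed.

Lemma half_p_lt : (p./2 < p)%N.
Proof. by rewrite -[p in (_ < p)%N]half_double_p ltnS leq_addr. Qed.

Lemma half_sum_ndvd i k : (0 < i)%N -> (0 < k)%N -> (i <= p./2)%N -> (k <= p./2)%N ->
  ~~ (p %| i + k)%N.
Proof.
move=> i0 k0 ih kh; apply/negP => /dvdn_leq; rewrite addn_gt0 i0 => /(_ isT).
by rewrite -{1}half_double_p => /leq_trans/(_ (leq_add ih kh)); rewrite ltnn.
Qed.

Lemma mem_D2 x : (x \in H) = (x == 1) || (x == t).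
Proof.
apply/cycleP/orP => [[i ->]|[/eqP->|/eqP->]]; last 2 first.
- by exists 0%N.
- by exists 1%N; rewrite expg1.
rewrite -(expg_mod _ t2); have : (i %% 2 < 2)%N by rewrite ltn_mod.
by case: (i %% 2)%N => [|[|//]] _; [left | right; rewrite expg1].
Qed.

Lemma invz_sub m : (m <= p)%N -> (z ^+ (p - m))^-1 = z ^+ m.
Proof. by move=> mp; apply/eqP; rewrite eq_invg_mul -expgD subnK // zp. Qed.

Lemma invz_fixed i : (z ^+ i)^-1 = z ^+ i -> (p %| i)%N.
Proof. by move=> zi; apply: invz_sqr_eq1; rewrite {1}zi mulgV. Qed.

Lemma lcos_tpow x e : lcos H (x * tpow e) = lcos H x.
Proof.
apply/eqP; rewrite lcos_eq invMg -mulgA mulVg mulg1 groupV.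
by case: e; rewrite /= ?cycle_id ?group1.
Qed.

Lemma lcosH_nf g x : exists m : 'I_p, lcos H x = lcos H (g * z ^+ m).
Proof.
have [m [e E]] := dihedral_nf (g^-1 * x); exists m.
by rewrite -(mulKVg g x) E mulgA lcos_tpow.
Qed.

Lemma lcosH_cases g1 g2 : lcos H g1 = lcos H g2 -> g2 = g1 \/ g2 = g1 * t.
Proof.
by move/eqP; rewrite lcos_eq mem_D2 => /orP[] /eqP E; [left | right];
  rewrite -(mulKVg g1 g2) E ?mulg1.
Qed.

Lemma lcosH_expz g a b : (lcos H (g * z ^+ a) == lcos H (g * z ^+ b)) = (z ^+ a == z ^+ b).
Proof.
rewrite lcos_eq invMg -mulgA mulKg mem_D2 -eq_mulVg1.
case: (z ^+ a == z ^+ b) => //=; apply/eqP.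
by rewrite invz_expz -expgD; apply: expz_neq_t.
Qed.

Lemma lcosH_expz_eq g a b : lcos H (g * z ^+ a) = lcos H (g * z ^+ b) -> z ^+ a = z ^+ b.
Proof. by move/eqP; rewrite lcosH_expz => /eqP. Qed.

Lemma lcosH_invz_eq g a b :
  lcos H (g * (z ^+ a)^-1) = lcos H (g * (z ^+ b)^-1) -> z ^+ a = z ^+ b.
Proof. by rewrite !invz_expz => /lcosH_expz_eq; rewrite -!invz_expz => /invg_inj. Qed.

Lemma lcosH_invz_expz g a b : lcos H (g * (z ^+ a)^-1) = lcos H (g * z ^+ b) ->
  (z ^+ a)^-1 = z ^+ b.
Proof. by rewrite invz_expz => /lcosH_expz_eq ->. Qed.

Lemma lcosH_t_invz g a : lcos H (g * t * (z ^+ a)^-1) = lcos H (g * z ^+ a).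
Proof. by rewrite -mulgA mul_t_invz mulgA -[g * _ * t]/(g * z ^+ a * tpow true) lcos_tpow. Qed.

Lemma lcosH_invz_dvd g k : lcos H g = lcos H (g * (z ^+ k)^-1) -> (p %| k)%N.
Proof.
rewrite -{1}(mulg1 g) -(expg0 z) => /esym /lcosH_invz_expz /eqP.
by rewrite expg0 invg_eq1 => /eqP; apply: expz_eq1.
Qed.

Implicit Types (g h x c w : gT) (f r : {ffun gT -> bool}).

Lemma coindP f : f \in coind t -> forall x, f (t * x) = f x.
Proof. by rewrite inE => /forallP f_t x; apply/eqP. Qed.

Lemma coind_coact g f : f \in coind t -> coact g f \in coind t.
Proof. by move=> f_t; rewrite inE; apply/forallP => x; rewrite !ffunE -mulgA coindP. Qed.

Lemma coindH f : f \in coind t -> forall h x, h \in H -> f (h * x) = f x.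
Proof. by move=> f_t h x; rewrite mem_D2 => /orP[] /eqP->; rewrite ?mul1g ?coindP. Qed.

Lemma coact_t_mulr f : coact t f = f -> forall x, f (x * t) = f x.
Proof. by move=> tf x; rewrite -[in RHS]tf ffunE. Qed.

Lemma Xfix_coind r : r \in Xfix t -> r \in coind t.
Proof. by rewrite inE => /andP[]. Qed.

Lemma Xfix_coact_t r : r \in Xfix t -> coact t r = r.
Proof. by rewrite inE => /and4P[_ /eqP]. Qed.

Lemma Xfix_nonconst r (v : bool) : r \in Xfix t -> r != [ffun=> v].
Proof. by rewrite inE => /and4P[_ _]; case: v. Qed.

Lemma Xfix_not_cofree r : r \in Xfix t -> ~~ cofree r.
Proof.
move/Xfix_coact_t => tr; apply/forallP => /(_ t).
by rewrite tr eqxx (negPf t_neq1).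
Qed.

Lemma const_notin_Xfix (v : bool) : [ffun=> v] \notin Xfix t.
Proof. by apply/negP => /(Xfix_nonconst v); rewrite eqxx. Qed.

Lemma lcosH_twist_inj i g1 g2 : (0 < i < p)%N -> lcos H g1 = lcos H g2 ->
  lcos H (g1 * (z ^+ i)^-1) = lcos H (g2 * (z ^+ i)^-1) -> g1 = g2.
Proof.
case/andP=> i_gt0 ip /lcosH_cases [->//|->]; rewrite lcosH_t_invz.
by move=> /lcosH_invz_expz /invz_fixed /(ltn_dvdn_eq0 ip) i0; rewrite i0 in i_gt0.
Qed.

Lemma lcosH_twist_neq k g : (0 < k < p)%N -> lcos H g <> lcos H (g * (z ^+ k)^-1).
Proof. by case/andP=> k_gt0 kp /lcosH_invz_dvd /(ltn_dvdn_eq0 kp) k0; rewrite k0 in k_gt0. Qed.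

Lemma lcosH_twist_disjoint i k g1 g2 : (0 < i <= p./2)%N -> (0 < k <= p./2)%N ->
  lcos H g1 = lcos H g2 -> lcos H (g1 * (z ^+ i)^-1) = lcos H (g2 * (z ^+ k)^-1) -> i = k.
Proof.
case/andP=> i_gt0 ih /andP[k_gt0 kh].
have [ip kp] : (i < p)%N /\ (k < p)%N by split; apply: leq_ltn_trans half_p_lt.
case/lcosH_cases=> ->; first by move/lcosH_invz_eq/(expz_inj ip kp).
rewrite lcosH_t_invz => /lcosH_invz_expz zik; have : (p %| i + k)%N.
  by apply: expz_eq1; rewrite expgD -zik mulgV.
by rewrite (negPf (half_sum_ndvd i_gt0 k_gt0 ih kh)).
Qed.

Lemma lcosH_twist_cover c x : lcos H x = lcos H c \/
  exists i, (0 < i <= p./2)%N /\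
    exists g, lcos H g = lcos H c /\ lcos H (g * (z ^+ i)^-1) = lcos H x.
Proof.
have [m ->] := lcosH_nf c x; have [m0|m_gt0] := posnP m.
  by left; rewrite m0 expg0 mulg1.
right; have [mh|mh] := leqP m p./2.
  exists m; rewrite m_gt0 mh; split=> //; exists (c * t).
  by rewrite lcosH_t_invz -[c * t]/(c * tpow true) lcos_tpow.
exists (p - m)%N; split; first by have := half_double_p; have := ltn_ord m; lia.
by exists c; rewrite invz_sub // ltnW.
Qed.

Lemma Xfix_twist_val r i g c w : r \in Xfix t -> c \in sval (lcos H g) ->
  w \in sval (lcos H (g * (z ^+ i)^-1)) -> r (w^-1 * c) = r (z ^+ i).
Proof.
move=> r_X; rewrite !mem_lcos => cH wH.
have -> : w^-1 * c = ((g * (z ^+ i)^-1)^-1 * w)^-1 * (z ^+ i * (g^-1 * c)).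
  by rewrite invMg invgK !mulgA mulgKV mulgK.
rewrite coindH ?groupVr ?Xfix_coind //.
by move: cH; rewrite mem_D2 => /orP[] /eqP->; rewrite ?mulg1 ?coact_t_mulr ?Xfix_coact_t.
Qed.

Lemma coind_expz_fixed f k : f \in coind t -> coact (z ^+ k) f = f -> ~~ (p %| k)%N ->
  f = [ffun=> f 1].
Proof.
move=> f_t zkf p_k.
have k_gt0 : (0 < k)%N by case: k zkf p_k => //; rewrite dvdn0.
have zf : coact z f = f.
  (* z is a power of z^k since p is prime *)
  case: (egcdnP p k_gt0) => u v uv _.
  have gcd1 : gcdn k p = 1%N by apply/eqP; rewrite -/(coprime k p) coprime_sym prime_coprime.
  have := coactX u zkf; rewrite -expgM mulnC uv gcd1 addn1 expgS mulnC expgM zp expg1n.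
  by rewrite mulg1.
have f_expz m : f (z ^+ m) = f 1 by rewrite -[in RHS](coactX m zf) ffunE mul1g.
apply/ffunP => x; rewrite ffunE; have [m [[|] ->]] := dihedral_nf x; last first.
  by rewrite mulg1 f_expz.
by rewrite -mul_t_invz coindP // invz_expz f_expz.
Qed.

Lemma Xfix_stab r g : r \in Xfix t -> coact g r = r -> g = 1 \/ g = t.
Proof.
move=> r_X gr; have [m [e def_g]] := dihedral_nf g; subst g.
have zmr : coact (z ^+ m) r = r.
  by case: e gr => /= gr; [rewrite -coactM Xfix_coact_t in gr | rewrite mulg1 in gr].
have [m0|m_gt0] := posnP m; first by rewrite m0 expg0 mul1g; case: e {gr}; [right|left].
have p_m : ~~ (p %| m)%N by rewrite /dvdn modn_small ?ltn_ord // -lt0n.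
have := Xfix_nonconst (r 1) r_X.
by rewrite -(coind_expz_fixed (Xfix_coind r_X) zmr p_m) eqxx.
Qed.

Lemma Xfix_orbit_eq r r' h : r \in Xfix t -> r' \in Xfix t -> coact h r = r' -> r = r'.
Proof.
move=> r_X r'_X hr; have [m [e def_h]] := dihedral_nf h; subst h.
have r'E : r' = coact (z ^+ m) r.
  by rewrite -hr; case: e {hr} => /=; rewrite ?mulg1 // -coactM Xfix_coact_t.
(* z^-m t z^m = z^-2m t fixes r, which forces z^2m = 1 *)
have conj_fix : coact ((z ^+ m)^-1 * t * z ^+ m) r = r.
  by rewrite -!coactM -r'E Xfix_coact_t // r'E coactK.
have [E|E] := Xfix_stab r_X conj_fix.
  by move: t_neq1; rewrite -(conjg_eq1 t (z ^+ m)) /conjg mulgA E eqxx.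
move: E; rewrite -mulgA mul_t_expz -invz_expz mulgA -{2}[t]mul1g => /mulIg /invz_sqr_eq1.
by move=> /(ltn_dvdn_eq0 (ltn_ord m)) m0; rewrite r'E m0 expg0 coact1.
Qed.

Lemma nonfree_orbit_Xfix f : f \in coind t -> ~~ cofree f ->
  f != [ffun=> true] -> f != [ffun=> false] -> exists c, coact c f \in Xfix t.
Proof.
move=> f_t /forallPn [g]; rewrite negb_imply => /andP[/eqP gf g1] fa fb.
have [m [e def_g]] := dihedral_nf g; subst g.
have f_nonconst : f != [ffun=> f 1] by case: (f 1).
case: e gf g1 => /= gf g1; last first.
  move: gf g1; rewrite mulg1 => gf g1; have p_m : ~~ (p %| m)%N.
    by apply/negP => /(ltn_dvdn_eq0 (ltn_ord m)) m0; move: g1; rewrite m0 expg0 eqxx.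
  by rewrite -(coind_expz_fixed f_t gf p_m) eqxx in f_nonconst.
(* c^-1 t c = z^m t for c = z^(m p./2), so c.f is fixed by t *)
pose c := z ^+ (m * p./2); exists c.
have tc : t * c = c * (z ^+ m * t).
  rewrite /c mul_t_expz -invz_expz mulgA; congr (_ * _).
  apply: (@mulgI _ (z ^+ (m * p./2))); rewrite mulgV mulgA -!expgD.
  by rewrite -mulnDr -[in X in (_ + X)%N](muln1 m) -mulnDr addn1 half_double_p mulnC
     expgM zp expg1n.
rewrite inE coind_coact //= coactM tc -coactM gf eqxx /=.
by rewrite !coact_nonconst.
Qed.

Section Transversal.
Variable Y : {set {ffun gT -> bool}}.
Hypothesis Y_free : free_transversal t Y.

Lemma free_transversal_sub y : y \in Y -> y \in coind t /\ cofree y.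
Proof. by case: Y_free => /subsetP sY _ /sY; rewrite inE => /andP[]. Qed.

Lemma free_transversal_uniq f y y' : f \in coind t -> cofree f -> y \in Y -> y' \in Y ->
  f \in coorbit y -> f \in coorbit y' -> y = y'.
Proof.
move=> f_t f_free yY y'Y fy fy'.
case: Y_free => _ /(_ f f_t f_free) /eqP /cards1P [y0 E].
have : y \in [set y in Y | f \in coorbit y] by rewrite inE yY fy.
have : y' \in [set y in Y | f \in coorbit y] by rewrite inE y'Y fy'.
by rewrite E !inE => /eqP -> /eqP ->.
Qed.

Lemma free_transversal_ex f : f \in coind t -> cofree f ->
  exists2 y, y \in Y & exists g, f = coact g y.
Proof.
move=> f_t f_free; case: Y_free => _ /(_ f f_t f_free) /eqP /cards1P [y0 E].
have : y0 \in [set y in Y | f \in coorbit y] by rewrite E set11.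
by rewrite inE => /andP[y0Y /coorbitP fy0]; exists y0.
Qed.

Lemma const_notin_transversal (v : bool) : [ffun=> v] \notin Y.
Proof.
apply/negP => /free_transversal_sub [_].
by apply/negP; apply: const_not_cofree t_neq1.
Qed.

Lemma Xfix_notin_transversal r : r \in Xfix t -> r \notin Y.
Proof.
by move=> r_X; apply/negP => /free_transversal_sub [_]; apply/negP; apply: Xfix_not_cofree.
Qed.

(* One map in each orbit: Xfix meets every orbit of type G/D_2 exactly once. *)
Definition orbit_rep f :=
  [|| f \in Y, f \in Xfix t, f == [ffun=> true] | f == [ffun=> false]].

Lemma orbit_rep_coact_eq f f' h : orbit_rep f -> orbit_rep f' -> coact h f = f' -> f = f'.
Proof.
have cofree_Y y : y \in Y -> cofree y by case/free_transversal_sub.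
have nfree_X r : r \in Xfix t -> ~~ cofree r := @Xfix_not_cofree r.
have nfree_c (v : bool) : ~~ cofree [ffun=> v] := const_not_cofree v t_neq1.
case/or4P=> [fY|fX|/eqP->|/eqP->] f'_rep hf; last 2 first.
- by rewrite -hf coact_const.
- by rewrite -hf coact_const.
- have f'_free : cofree f' by rewrite -hf cofree_coact ?cofree_Y.
  case/or4P: f'_rep => [f'Y|/nfree_X|/eqP f'E|/eqP f'E]; last 3 first.
  + by rewrite f'_free.
  + by move: f'_free; rewrite f'E (negPf (nfree_c true)).
  + by move: f'_free; rewrite f'E (negPf (nfree_c false)).
  have f_t := (free_transversal_sub fY).1.
  apply: (@free_transversal_uniq f') => //; first by rewrite -hf coind_coact.
    by apply/coorbitP; exists h.
  by apply/coorbitP; exists 1; rewrite coact1.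
- have f_def : f = coact h^-1 f' by rewrite -hf coactK.
  case/or4P: f'_rep => [f'Y|f'X|/eqP f'E|/eqP f'E].
  + by move: (nfree_X f fX); rewrite f_def cofree_coact ?cofree_Y.
  + exact: Xfix_orbit_eq fX f'X hf.
  + by have := Xfix_nonconst true fX; rewrite f_def f'E coact_const eqxx.
  + by have := Xfix_nonconst false fX; rewrite f_def f'E coact_const eqxx.
Qed.

End Transversal.

Local Notation Q := (gquot H).
Local Notation E := (gquot 1%G).
Local Notation P := (gquot [set: gT]%G).

Local Notation QQ := (gsum Q Q).
Definition qproj : gmap Q P := oproj (subsetT H).
Definition Pi := gpi (codiag Q) qproj.
Definition Ev := gev (codiag Q) qproj.

Definition pi_sec_fun (F : {set gT} -> bool) : {ffun Q -> option QQ} :=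
  [ffun B : Q => Some (if F (sval B) then inl B else inr B)].

Lemma pi_sec_good F : pi_good (codiag Q) qproj (lcos _ 1, pi_sec_fun F).
Proof.
apply/forallP => B /=; case: eqP => [_|[]]; last exact: gquotT_single.
by rewrite ffunE; case: (F _).
Qed.

Definition pi_sec F : Pi := exist _ (lcos _ 1, pi_sec_fun F) (pi_sec_good F).

Definition sec_val (u : Pi) (B : Q) : QQ :=
  if (sval u).2 B is Some a then a else inl B.

Lemma sec_valP (u : Pi) B :
  (sval u).2 B = Some (sec_val u B) /\ codiag Q (sec_val u B) = B.
Proof.
have := forallP (svalP u) B; case: eqP => [_|[]]; last exact: gquotT_single.
by rewrite /sec_val; case: ((sval u).2 B) => // a /eqP.
Qed.

Lemma sec_val_act g (u : Pi) B : sec_val (gsact g u) (gsact g B) = gsact g (sec_val u B).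
Proof. by rewrite {1}/sec_val /= ffunE gsactVK; have [-> _] := sec_valP u B. Qed.

Lemma sec_val_pi_sec F B : sec_val (pi_sec F) B = if F (sval B) then inl B else inr B.
Proof. by rewrite /sec_val /= ffunE. Qed.

Lemma pi_sec_ext F F' : (forall B : Q, F (sval B) = F' (sval B)) -> pi_sec F = pi_sec F'.
Proof. by move=> FF'; apply: val_inj; congr (_, _); apply/ffunP => B; rewrite !ffunE FF'. Qed.

Lemma pi_sec_act g F : gsact g (pi_sec F) = pi_sec (fun B => F (g^-1 *: B)).
Proof.
apply: val_inj; congr (_, _); first exact: gquotT_single.
apply/ffunP => B; rewrite !ffunE /=.
by case: (F _) => /=; congr (Some (_ _)); apply: (gsactK (X := Q)).
Qed.

Definition is_inl (u : QQ) := if u is inl _ then true else false.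

Lemma pi_secE (u : Pi) F : (forall B : Q, F (sval B) = is_inl (sec_val u B)) -> u = pi_sec F.
Proof.
move=> uF; apply: val_inj; case: u uF => [[y s] s_good] uF /=; congr (_, _).
  exact: gquotT_single.
apply/ffunP => B; rewrite ffunE uF.
have [] := sec_valP (exist _ (y, s) s_good) B.
by rewrite /= => ->; case: (sec_val _ B) => a /= <-.
Qed.

(* A map f in Map^{D_2}(G, {a,b}) corresponds to the section choosing [a] over
   the coset xD_2 iff f(x^-1) = a; the inverse turns (g.f)(x) = f(xg) into the
   left translation action on cosets. *)
Definition pi_of_coind f := pi_sec (fun B => [exists w in B, f w^-1]).

Lemma pi_of_coind_val f x :
  f \in coind t -> [exists w in sval (lcos H x), f w^-1] = f x^-1.
Proof.
move=> f_t; apply/existsP/idP => [[w /andP[Hw fw]]|fx].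
  rewrite mem_lcos in Hw; have := @coindH f f_t _ x^-1 (groupVr Hw).
  by rewrite invMg invgK mulgK => <-.
by exists x; rewrite fx andbT mem_lcos mulVg group1.
Qed.

Lemma pi_of_coind_inj f f' : f \in coind t -> f' \in coind t ->
  pi_of_coind f = pi_of_coind f' -> f = f'.
Proof.
move=> f_t f'_t ff'; apply/ffunP => x.
have := congr1 (fun u => is_inl (sec_val u (lcos H x^-1))) ff'.
by rewrite /pi_of_coind !sec_val_pi_sec !pi_of_coind_val // invgK; case: (f x); case: (f' x).
Qed.

Lemma pi_of_coind_onto (u : Pi) : exists2 f, f \in coind t & u = pi_of_coind f.
Proof.
pose f := [ffun x => is_inl (sec_val u (lcos H x^-1))].
have f_t : f \in coind t.
  rewrite inE; apply/forallP => x; rewrite !ffunE invMg.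
  suff -> : lcos H (x^-1 * t^-1) = lcos H x^-1 by [].
  by apply/eqP; rewrite lcos_eq invMg !invgK -mulgA mulgV mulg1 cycle_id.
exists f => //; apply: pi_secE => B.
by have [x ->] := lcosP B; rewrite pi_of_coind_val // ffunE invgK.
Qed.

(* For f fixed by K, the equivariant map G/K -> Pi sending cK to c.f. *)
Definition orbit_fun (K : {group gT}) f (o : gquot K) : Pi :=
  pi_sec (fun B => [exists c in sval o, exists w in B, f (w^-1 * c)]).

Lemma orbit_funE (K : {group gT}) f g (o : gquot K) :
  orbit_fun f (gsact g o) = gsact g (orbit_fun f o).
Proof.
rewrite /orbit_fun pi_sec_act; apply: pi_sec_ext => B /=.
apply/existsP/existsP => -[c /andP[Hc /existsP[w /andP[Hw Hf]]]].
  exists (g^-1 * c); rewrite -mem_lcoset Hc /=; apply/existsP; exists (g^-1 * w).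
  by rewrite mem_lcoset invgK mulKVg Hw /= invMg invgK -mulgA mulKVg.
exists (g * c); rewrite mem_lcoset mulKg Hc /=; apply/existsP; exists (g * w).
by rewrite mem_lcoset invgK in Hw; rewrite Hw /= invMg -mulgA mulKg.
Qed.

Definition orbit_map (K : {group gT}) f : gmap (gquot K) Pi := GMap (@orbit_funE K f).

Lemma orbit_fun_lcos (K : {group gT}) f c : (forall k, k \in K -> coact k f = f) ->
  orbit_fun f (lcos K c) = pi_of_coind (coact c f).
Proof.
move=> Kf; apply: pi_sec_ext => B.
apply/existsP/existsP => [[c' /andP[Hc /existsP[w /andP[Hw fw]]]]|[w /andP[Hw fw]]].
  by exists w; rewrite Hw /= ffunE; rewrite mem_lcos in Hc; rewrite -(Kf _ Hc) ffunE -mulgA mulKVg.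
exists c; rewrite mem_lcos mulVg group1 /=; apply/existsP; exists w.
by rewrite Hw -[f _](ffunE (fun x => f (x * c))).
Qed.

Lemma sec_val_orbit_fun (K : {group gT}) f c0 w0 (v : bool) :
  (forall c w, c \in sval (lcos K c0) -> w \in sval (lcos H w0) -> f (w^-1 * c) = v) ->
  sec_val (orbit_fun f (lcos K c0)) (lcos H w0) =
    if v then inl (lcos H w0) else inr (lcos H w0).
Proof.
move=> fv; rewrite sec_val_pi_sec; congr (if _ then _ else _).
apply/existsP/idP => [[c /andP[Hc /existsP[w /andP[Hw]]]]|v_true]; first by rewrite fv.
exists c0; rewrite mem_lcos mulVg group1 /=; apply/existsP; exists w0.
by rewrite mem_lcos mulVg group1 /= fv // mem_lcos mulVg group1.
Qed.

Lemma orbit_fun1_lcos f g : orbit_fun f (lcos 1%G g) = pi_of_coind (coact g f).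
Proof. by apply: orbit_fun_lcos => k /set1gP ->; apply: coact1. Qed.

Lemma orbit_funH_lcos r c : r \in Xfix t -> orbit_fun r (lcos H c) = pi_of_coind (coact c r).
Proof.
by move=> r_X; apply: orbit_fun_lcos => k; rewrite mem_D2 => /orP[] /eqP->;
  [apply: coact1 | apply: Xfix_coact_t].
Qed.

Lemma orbit_funT_lcos (v : bool) c :
  orbit_fun [ffun=> v] (lcos [set: gT]%G c) = pi_of_coind [ffun=> v].
Proof. by rewrite orbit_fun_lcos ?coact_const // => k _; rewrite coact_const. Qed.

Section PiOrbits.
Variable Y : {set {ffun gT -> bool}}.
Hypothesis Y_free : free_transversal t Y.

Definition void_Pi : gmap (gempty gT) Pi.
Proof. by refine (@GMap gT (gempty gT) Pi (fun v => match v with end) _) => g []. Defined.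

(* Non-representatives get an empty piece, so that the orbit partition of Pi is
   indexed by all maps. *)
Definition pi_piece f : piece Pi :=
  if f \in Y then existT _ E (orbit_map 1%G f)
  else if f \in Xfix t then existT _ Q (orbit_map H f)
  else if (f == [ffun=> true]) || (f == [ffun=> false]) then existT _ P (orbit_map _ f)
  else existT _ (gempty gT) void_Pi.

Lemma pi_piece_free f : f \in Y -> pi_piece f = existT _ E (orbit_map 1%G f).
Proof. by rewrite /pi_piece => ->. Qed.

Lemma pi_piece_Xfix f : f \in Xfix t -> pi_piece f = existT _ Q (orbit_map H f).
Proof. by move=> f_X; rewrite /pi_piece (negPf (Xfix_notin_transversal Y_free f_X)) f_X. Qed.

Lemma pi_piece_const (v : bool) :
  pi_piece [ffun=> v] = existT _ P (orbit_map [set: gT]%G [ffun=> v]).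
Proof.
rewrite /pi_piece (negPf (const_notin_transversal Y_free v)) (negPf (const_notin_Xfix v)).
by case: v; rewrite eqxx ?orbT.
Qed.

Lemma pi_piece_void f : ~~ orbit_rep Y f -> pi_piece f = existT _ (gempty gT) void_Pi.
Proof. by rewrite /pi_piece /orbit_rep => /norP[/negPf-> /norP[/negPf-> /negPf->]]. Qed.

Lemma pi_piece_val f (o : projT1 (pi_piece f)) :
  exists c, projT2 (pi_piece f) o = pi_of_coind (coact c f) /\ orbit_rep Y f /\ f \in coind t.
Proof.
have [fY|fY] := boolP (f \in Y).
  move: o; rewrite pi_piece_free // => o; have [g ->] := lcosP o; exists g => /=.
  by rewrite orbit_fun1_lcos /orbit_rep fY; case: (free_transversal_sub Y_free fY).
have [fX|fX] := boolP (f \in Xfix t).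
  move: o; rewrite pi_piece_Xfix // => o; have [c ->] := lcosP o; exists c => /=.
  by rewrite orbit_funH_lcos // /orbit_rep fX orbT Xfix_coind.
have [fC|fC] := boolP ((f == [ffun=> true]) || (f == [ffun=> false])).
  have [v f_v] : exists v, f = [ffun=> v] by case/orP: fC => /eqP->; eexists.
  move: o; rewrite f_v pi_piece_const => o; have [c ->] := lcosP o; exists c => /=.
  rewrite orbit_funT_lcos coact_const /orbit_rep -f_v fC !orbT f_v inE.
  by split => //; split => //; apply/forallP => x; rewrite !ffunE.
by move: o; rewrite pi_piece_void /orbit_rep ?(negPf fY) ?(negPf fX) //=; case.
Qed.

Lemma pi_piece_inj f : injective (projT2 (pi_piece f)).
Proof.
have [fY|fY] := boolP (f \in Y).
  rewrite pi_piece_free // => o1 o2 /=; have [g1 ->] := lcosP o1; have [g2 ->] := lcosP o2.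
  have [f_t f_free] := free_transversal_sub Y_free fY.
  rewrite !orbit_fun1_lcos => /(pi_of_coind_inj (coind_coact _ f_t) (coind_coact _ f_t)).
  move=> /(congr1 (coact g2^-1)); rewrite coactK coactM => fix_f.
  move/forallP: f_free => /(_ (g2^-1 * g1)) /implyP; rewrite fix_f eqxx => /(_ isT).
  by rewrite -eq_mulVg1 eq_sym => /eqP->.
have [fX|fX] := boolP (f \in Xfix t).
  rewrite pi_piece_Xfix // => o1 o2 /=; have [g1 ->] := lcosP o1; have [g2 ->] := lcosP o2.
  have f_t := Xfix_coind fX.
  rewrite !orbit_funH_lcos // => /(pi_of_coind_inj (coind_coact _ f_t) (coind_coact _ f_t)).
  move=> /(congr1 (coact g2^-1)); rewrite coactK coactM => /(Xfix_stab fX) g12.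
  apply/eqP; rewrite lcos_eq -groupV invMg invgK mem_D2.
  by case: g12 => ->; rewrite eqxx ?orbT.
have [fC|fC] := boolP ((f == [ffun=> true]) || (f == [ffun=> false])).
  have [v ->] : exists v, f = [ffun=> v] by case/orP: fC => /eqP->; eexists.
  by rewrite pi_piece_const => o1 o2 _; apply: gquotT_single.
by rewrite pi_piece_void /orbit_rep ?(negPf fY) ?(negPf fX) //=; case.
Qed.

Lemma pi_piece_disjoint f f' (o : projT1 (pi_piece f)) (o' : projT1 (pi_piece f')) :
  projT2 (pi_piece f) o = projT2 (pi_piece f') o' -> f = f'.
Proof.
have [c [-> [f_rep f_t]]] := pi_piece_val o.
have [c' [-> [f'_rep f'_t]]] := pi_piece_val o'.
move/(pi_of_coind_inj (coind_coact _ f_t) (coind_coact _ f'_t)) => /(congr1 (coact c'^-1)).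
by rewrite coactK coactM; apply: (orbit_rep_coact_eq Y_free).
Qed.

Lemma pi_piece_cover u : exists f, exists o : projT1 (pi_piece f), projT2 (pi_piece f) o = u.
Proof.
have [f f_t ->] := pi_of_coind_onto u.
have [fC|fC] := boolP ((f == [ffun=> true]) || (f == [ffun=> false])).
  have [v ->] : exists v, f = [ffun=> v] by case/orP: fC => /eqP->; eexists.
  exists [ffun=> v]; rewrite pi_piece_const; exists (lcos [set: gT]%G 1).
  by rewrite /= orbit_funT_lcos.
have [fa fb] : f != [ffun=> true] /\ f != [ffun=> false] by move: fC; rewrite negb_or => /andP[].
have [f_free|f_nfree] := boolP (cofree f).
  have [y yY [g ->]] := free_transversal_ex Y_free f_t f_free.
  by exists y; rewrite pi_piece_free //; exists (lcos 1%G g); rewrite /= orbit_fun1_lcos.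
have [c cf_X] := nonfree_orbit_Xfix f_t f_nfree fa fb.
exists (coact c f); rewrite pi_piece_Xfix //; exists (lcos H c^-1).
by rewrite /= orbit_funH_lcos // coactK.
Qed.

End PiOrbits.

Lemma ev_pt_subproof (u : Pi) B :
  (sval (u, sec_val u B).1).2 (codiag Q (u, sec_val u B).2) == Some (u, sec_val u B).2.
Proof. by have [uB /= ->] := sec_valP u B; rewrite uB. Qed.

Definition ev_pt (u : Pi) (B : Q) : Ev := exist _ (u, sec_val u B) (ev_pt_subproof u B).

Lemma ev_pt_act g (u : Pi) B : ev_pt (gsact g u) (gsact g B) = gsact g (ev_pt u B).
Proof. by apply: val_inj; rewrite /= sec_val_act. Qed.

Local Notation evp := (ev_proj (codiag Q) qproj).
Local Notation eve := (ev_eval (codiag Q) qproj).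

Lemma ev_ptE (e : Ev) : e = ev_pt (evp e) (codiag Q (eve e)).
Proof. by apply: val_inj; case: e => [[u a] ua] /=; congr (_, _); rewrite /sec_val (eqP ua). Qed.

Section OrbitPullback.
Variables (O : gset gT) (j : gmap O Pi).

Definition pb_pt (o : O) (B : Q) : gpb evp j := exist _ (ev_pt (j o) B, o) (eqxx _).

Lemma pb_pt_inj o o' B B' : pb_pt o B = pb_pt o' B' -> o = o' /\ B = B'.
Proof.
move=> /(congr1 val) /= [_ sBB' ->]; split => //.
by have [_ <-] := sec_valP (j o) B; have [_ <-] := sec_valP (j o') B'; rewrite sBB'.
Qed.

Lemma pb_ptE (w : gpb evp j) : w = pb_pt (pb2 evp j w) (codiag Q (eve (pb1 evp j w))).
Proof.
by apply: val_inj; case: w => [[e o] eo] /=; congr (_, _); rewrite {1}(ev_ptE e) (eqP eo).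
Qed.

(* The pullback of the evaluation Ev -> Pi along j is {(o, B) : O * G/D_2}; a
   slice (be, ga) parametrises part of it as o' |-> (ga o', be o'). *)
Definition orbit_slice := {O' : gset gT & (gmap O' Q * gmap O' O)%type}.

Variable d : orbit_slice.
Local Notation be := (projT2 d).1.
Local Notation ga := (projT2 d).2.

Lemma pb_sliceE g o' :
  pb_pt (ga (gsact g o')) (be (gsact g o')) = gsact g (pb_pt (ga o') (be o')).
Proof. by apply: val_inj; rewrite !gfunE /= gfunE ev_pt_act. Qed.

Definition pb_slice : piece (gpb evp j) := existT _ (projT1 d) (GMap pb_sliceE).

Lemma pb_slice_proj : gcomp (pb2 evp j) (projT2 pb_slice) = ga.
Proof. exact: gmap_ext. Qed.

Lemma pb_slice_eval (v : bool) :
  (forall o', sec_val (j (ga o')) (be o') = if v then inl (be o') else inr (be o')) ->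
  gcomp eve (gcomp (pb1 evp j) (projT2 pb_slice)) = gcomp (if v then ginl Q Q else ginr Q Q) be.
Proof. by move=> jv; apply: gmap_ext => o' /=; rewrite jv; case: v {jv}. Qed.

End OrbitPullback.

Variable S : tambara gT.
Local Open Scope ring_scope.
Local Notation res := (@tR _ S _ _).
Local Notation tr := (@tT _ S _ _).
Local Notation nm := (@tN _ S _ _).

Section OrbitNorm.
Variables (s : tS S QQ) (a b : tS S Q).
Hypotheses (s_a : res (ginl Q Q) s = a) (s_b : res (ginr Q Q) s = b).

Lemma norm_orbit (O : gset gT) (j : gmap O Pi) (I : finType) (d : I -> orbit_slice O)
    (v : I -> bool) :
  (forall i (o1 o2 : projT1 (d i)), (projT2 (d i)).2 o1 = (projT2 (d i)).2 o2 ->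
     (projT2 (d i)).1 o1 = (projT2 (d i)).1 o2 -> o1 = o2) ->
  (forall i k (o1 : projT1 (d i)) (o2 : projT1 (d k)), (projT2 (d i)).2 o1 = (projT2 (d k)).2 o2 ->
     (projT2 (d i)).1 o1 = (projT2 (d k)).1 o2 -> i = k) ->
  (forall o B, exists i, exists o' : projT1 (d i),
     (projT2 (d i)).2 o' = o /\ (projT2 (d i)).1 o' = B) ->
  (forall i o', sec_val (j ((projT2 (d i)).2 o')) ((projT2 (d i)).1 o') =
     if v i then inl ((projT2 (d i)).1 o') else inr ((projT2 (d i)).1 o')) ->
  res j (nm evp (res eve s)) =
    \prod_i nm (projT2 (d i)).2 (res (projT2 (d i)).1 (if v i then a else b)).
Proof.
move=> d_inj d_disj d_cover d_val.
rewrite tN_pb (@tN_partition_along gT S _ I (fun i => pb_slice j (d i))); first last.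
- move=> w; have [i [o' [E1 E2]]] := d_cover (pb2 evp j w) (codiag Q (eve (pb1 evp j w))).
  by exists i, o'; rewrite /= [RHS]pb_ptE -E1 -E2.
- by move=> i k o1 o2 /pb_pt_inj [E1 E2]; apply: d_disj E1 E2.
- by move=> i o1 o2 /pb_pt_inj [E1 E2]; apply: d_inj E1 E2.
apply: eq_bigr => i _; rewrite pb_slice_proj.
have -> : res (projT2 (pb_slice j (d i))) (res (pb1 evp j) (res eve s)) =
  res (gcomp eve (gcomp (pb1 evp j) (projT2 (pb_slice j (d i))))) s by rewrite !tR_comp.
rewrite (pb_slice_eval (d_val i)) tR_comp.
by case: (v i); rewrite ?s_a ?s_b.
Qed.

Lemma norm_free_orbit y : y \in coind t ->
  res (orbit_map 1%G y) (nm evp (res eve s)) =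
  \prod_(i < p) weyl S (z ^+ i)%g (res_e_D2 S t (val2 a b y (z ^+ i)%g)).
Proof.
move=> y_t.
pose d (i : 'I_p) : orbit_slice E :=
  existT _ E (gcomp (oproj (sub1G H)) (rmul (z ^+ i)^-1)%g, gid E).
rewrite (@norm_orbit _ (orbit_map 1%G y) _ d (fun i => y (z ^+ i)%g)).
- by apply: eq_bigr => i _; rewrite tN_id tR_comp.
- by move=> i o1 o2; rewrite /d /= => ->.
- move=> i k o1 o2; rewrite /d; cbn [projT2 fst snd]; rewrite !gidE => <-.
  have [g ->] := lcosP o1; rewrite !gcompE !rmul_lcos !oproj_lcos.
  by move/lcosH_invz_eq/(expz_inj (ltn_ord i) (ltn_ord k))/ord_inj.
- move=> o B; have [g ->] := lcosP o; have [x ->] := lcosP B; have [m ->] := lcosH_nf g x.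
  have lt_m : ((p - m) %% p < p)%N by rewrite ltn_mod prime_gt0.
  exists (Ordinal lt_m), (lcos 1%G g); rewrite /d; cbn [projT2 fst snd].
  rewrite gidE gcompE rmul_lcos oproj_lcos.
  by rewrite expz_mod invz_sub // ltnW.
- move=> i o'; rewrite /d; cbn [projT2 fst snd]; rewrite gidE gcompE.
  have [g ->] := lcosP o'; rewrite rmul_lcos oproj_lcos.
  apply: sec_val_orbit_fun => c w; rewrite mem_lcos1 mem_lcos => /eqP -> Hw.
  have := @coindH y y_t _ (z ^+ i)%g (groupVr Hw).
  by rewrite invMg invgK -mulgA mulgKV.
Qed.

Lemma norm_Xfix_orbit r : r \in Xfix t ->
  res (orbit_map H r) (nm evp (res eve s)) =
  val2 a b r 1%g * \prod_(k < p./2) nm_e_D2 S t (weyl S (z ^+ k.+1)%g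
                        (res_e_D2 S t (val2 a b r (z ^+ k.+1)%g))).
Proof.
move=> r_X.
pose twist i : gmap E Q := gcomp (oproj (sub1G H)) (rmul (z ^+ i)^-1)%g.
pose d (i : 'I_(p./2).+1) : orbit_slice Q :=
  if i == 0 :> nat then existT _ Q (gid Q, gid Q) else existT _ E (twist i, oproj (sub1G H)).
have range (i : 'I_(p./2).+1) : i != 0 :> nat -> (0 < i <= p./2)%N.
  by move=> i0; rewrite lt0n i0 /= -ltnS ltn_ord.
have range_p (i : 'I_(p./2).+1) : i != 0 :> nat -> (0 < i < p)%N.
  by move=> /range /andP[-> ih]; apply: leq_ltn_trans ih half_p_lt.
rewrite (@norm_orbit _ (orbit_map H r) _ d (fun i => r (z ^+ i)%g)).
- rewrite big_ord_recl /d /= tN_id tR_id expg0; congr (_ * _).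
  by apply: eq_bigr => i _; rewrite /bump leq0n add1n tR_comp.
- move=> i; rewrite /d; case: eqP => [_ o1 o2|/eqP i0 o1 o2]; cbn [projT2 fst snd].
    by rewrite !gidE.
  have [g1 ->] := lcosP o1; have [g2 ->] := lcosP o2; rewrite !gcompE !rmul_lcos !oproj_lcos.
  by move=> E1 E2; congr (lcos _ _); apply: lcosH_twist_inj (range_p i i0) E1 E2.
- move=> i k; rewrite /d; case: eqP => [i0|/eqP i0]; case: eqP => [k0|/eqP k0] o1 o2;
    cbn [projT2 fst snd]; rewrite ?gidE.
  + by move=> _ _; apply: val_inj; rewrite /= i0 k0.
  + have [g ->] := lcosP o2; rewrite gcompE rmul_lcos !oproj_lcos => ->.
    by move/(lcosH_twist_neq (range_p k k0)).
  + have [g ->] := lcosP o1; rewrite gcompE rmul_lcos !oproj_lcos => <-.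
    by move/esym/(lcosH_twist_neq (range_p i i0)).
  + have [g1 ->] := lcosP o1; have [g2 ->] := lcosP o2.
    rewrite !gcompE !rmul_lcos !oproj_lcos => E1 E2; apply: val_inj.
    exact: lcosH_twist_disjoint (range i i0) (range k k0) E1 E2.
- move=> o B; have [c ->] := lcosP o; have [x ->] := lcosP B.
  case: (lcosH_twist_cover c x) => [->|[i [range_i [g [E1 E2]]]]].
    by exists ord0, (lcos H c : Q).
  have lt_i : (i < (p./2).+1)%N by case/andP: range_i.
  exists (Ordinal lt_i); rewrite /d ifN_eq; last by rewrite -lt0n; case/andP: range_i.
  by exists (lcos 1%G g); cbn [projT2 fst snd]; rewrite gcompE rmul_lcos !oproj_lcos.
- move=> i; rewrite /d; case: eqP => [i0|_] o'; cbn [projT2 fst snd].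
    rewrite gidE i0; have [c ->] := lcosP o'.
    apply: sec_val_orbit_fun => c' w cH wH.
    by apply: (Xfix_twist_val r_X cH); rewrite expg0 invg1 mulg1.
  rewrite gcompE; have [g ->] := lcosP o'; rewrite rmul_lcos !oproj_lcos.
  by apply: sec_val_orbit_fun => c w; apply: Xfix_twist_val.
Qed.

Lemma norm_const_orbit (v : bool) :
  res (orbit_map [set: gT]%G [ffun=> v]) (nm evp (res eve s)) = nm qproj (if v then a else b).
Proof.
pose d (i : 'I_1) : orbit_slice P := existT _ Q (gid Q, qproj).
rewrite (@norm_orbit _ _ _ d (fun=> v)).
- by rewrite big_ord1 tR_id.
- by move=> i o1 o2 _.
- by move=> i k _ _ _ _; rewrite !ord1.
- by move=> o B; exists ord0, B; split => //; apply: gquotT_single.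
- move=> i o'; rewrite /d; cbn [projT2 fst snd]; rewrite gidE.
  have [x ->] := lcosP o'; rewrite (gquotT_single (qproj _) (lcos [set: gT]%G 1)).
  by apply: sec_val_orbit_fun => c w _ _; rewrite ffunE.
Qed.

End OrbitNorm.

Lemma half_pred_p : ((p - 1) %/ 2)%N = p./2.
Proof. by rewrite divn2 -{1}half_double_p subn1 /= addnn doubleK. Qed.

Definition free_summand (a b : tS S Q) (y : {ffun gT -> bool}) :=
  tr_e_G S (\prod_(1 <= i < p.+1) weyl S (z ^+ i)%g (res_e_D2 S t (val2 a b y (z ^+ i)%g))).

Definition Xfix_summand (a b : tS S Q) (x : {ffun gT -> bool}) :=
  tr_D2_G S t (val2 a b x 1%g *
    \prod_(1 <= i < ((p - 1) %/ 2).+1)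
      nm_e_D2 S t (weyl S (z ^+ i)%g (res_e_D2 S t (val2 a b x (z ^+ i)%g)))).

Section OrbitSummands.
Variables (s : tS S QQ) (a b : tS S Q) (Y : {set {ffun gT -> bool}}).
Hypotheses (s_a : res (ginl Q Q) s = a) (s_b : res (ginr Q Q) s = b).
Hypothesis Y_free : free_transversal t Y.

Definition pi_summand f :=
  tr (gcomp (pi_proj (codiag Q) qproj) (projT2 (pi_piece Y f)))
     (res (projT2 (pi_piece Y f)) (nm evp (res eve s))).

Lemma pi_summand_free y : y \in Y -> pi_summand y = free_summand a b y.
Proof.
move=> yY; rewrite /pi_summand pi_piece_free //; cbn [projT2].
rewrite (gmap_to_point (gcomp _ _) (oproj (sub1G [set: gT]%G))) (norm_free_orbit s_a s_b).
  by rewrite /free_summand (prod_shift1 (F := fun i => weyl S _ _)) ?prime_gt0 //= zp expg0.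
by case: (free_transversal_sub Y_free yY).
Qed.

Lemma pi_summand_Xfix r : r \in Xfix t -> pi_summand r = Xfix_summand a b r.
Proof.
move=> rX; rewrite /pi_summand (pi_piece_Xfix Y_free rX); cbn [projT2].
rewrite (gmap_to_point (gcomp _ _) (oproj (subsetT H))) (norm_Xfix_orbit s_a s_b rX).
by rewrite /Xfix_summand half_pred_p big_add1 /= big_mkord.
Qed.

Lemma pi_summand_const (v : bool) : pi_summand [ffun=> v] = nm_D2_G S t (if v then a else b).
Proof.
rewrite /pi_summand (pi_piece_const Y_free); cbn [projT2].
rewrite (gmap_to_point (gcomp _ _) (gid P)).
by rewrite tT_id (norm_const_orbit s_a s_b).
Qed.

Lemma pi_summand_void f : ~~ orbit_rep Y f -> pi_summand f = 0.
Proof.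
move=> f_nrep; rewrite /pi_summand pi_piece_void //; cbn [projT1 projT2].
by rewrite (@tS_void _ S (gempty gT) _ (res _ _)) ?tT0 //; case.
Qed.

Lemma pi_summandE f : pi_summand f =
  (if f \in Y then free_summand a b f else 0) + (if f \in Xfix t then Xfix_summand a b f else 0)
  + (if f == [ffun=> true] then nm_D2_G S t a else 0)
  + (if f == [ffun=> false] then nm_D2_G S t b else 0).
Proof.
have const_ne (v : bool) r : r \in Y \/ r \in Xfix t -> (r == [ffun=> v]) = false.
  case=> [rY|rX]; apply/negbTE; last exact: Xfix_nonconst.
  by apply: contraTneq rY => ->; apply: const_notin_transversal.
have [fY|fY] := boolP (f \in Y).
  have fX : f \notin Xfix t by apply: contraTN fY; apply: Xfix_notin_transversal.
  by rewrite pi_summand_free // (negPf fX) !(const_ne _ _ (or_introl fY)) !addr0.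
have [fX|fX] := boolP (f \in Xfix t).
  by rewrite pi_summand_Xfix // !(const_ne _ _ (or_intror fX)) !addr0 add0r.
rewrite !add0r.
have [->|fa] := eqVneq f [ffun=> true].
  by rewrite pi_summand_const ifN ?addr0 //; apply/eqP => /ffunP/(_ 1%g); rewrite !ffunE.
have [->|fb] := eqVneq f [ffun=> false]; first by rewrite pi_summand_const add0r.
by rewrite pi_summand_void ?add0r // /orbit_rep (negPf fY) (negPf fX) (negPf fa) (negPf fb).
Qed.

End OrbitSummands.

Theorem norm_D2_add (a b : tS S Q) (Y : {set {ffun gT -> bool}}) : free_transversal t Y ->
  nm_D2_G S t (a + b) = nm_D2_G S t a + nm_D2_G S t b
    + \sum_(x in Xfix t) Xfix_summand a b x + \sum_(y in Y) free_summand a b y.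
Proof.
move=> Y_free; have [s [s_a s_b]] := tS_sum_onto a b.
rewrite -{1}s_a -{1}s_b -tT_codiag /nm_D2_G t_distr.
rewrite (tT_partition_along (pi_piece_inj Y_free) (pi_piece_disjoint Y_free)
  (pi_piece_cover Y_free)).
rewrite (eq_bigr _ (fun f _ => pi_summandE s_a s_b Y_free f)) !big_split /=.
rewrite -!big_mkcond !big_pred1_eq.
by rewrite -addrA (addrC _ (_ + _)) (addrC (\sum_(i in Y) _)) addrA.
Qed.

End Dihedral.

Local Open Scope ring_scope.

Theorem lemma8p11 (gT : finGroupType) (tau zeta : gT) (p : nat)
  (S : tambara gT) (a b : tS S (gquot <[tau]>%G)) (Y : {set {ffun gT -> bool}}) :
  prime p -> odd p ->
  (tau ^+ 2 = 1)%g -> (zeta ^+ p = 1)%g -> ((tau * zeta) ^+ 2 = 1)%g ->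
  <<[set tau; zeta]>>%g = [set: gT] -> #|gT| = (2 * p)%N ->
  free_transversal tau Y ->
  nm_D2_G S tau (a + b) =
    nm_D2_G S tau a + nm_D2_G S tau b
    + \sum_(x in Xfix tau)
        tr_D2_G S tau (val2 a b x 1%g *
          \prod_(1 <= i < ((p - 1) %/ 2).+1)
            nm_e_D2 S tau (weyl S (zeta ^+ i)%g (res_e_D2 S tau (val2 a b x (zeta ^+ i)%g))))
    + \sum_(y in Y)
        tr_e_G S (\prod_(1 <= i < p.+1)
                    weyl S (zeta ^+ i)%g (res_e_D2 S tau (val2 a b y (zeta ^+ i)%g))).
Proof.
move=> p_prime p_odd tau2 zetap tauzeta2 gen card Y_free.
exact: (norm_D2_add p_prime p_odd tau2 zetap tauzeta2 gen card).
Qed.
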